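(* Let $(\mathcal{B},\mathcal{B}',\langle\cdot,\cdot\rangle,k)$ be an RKBS with kernel on a set $X$ such that $\{k(x,\cdot):x\in X\}$ is linearly independent, and let $(\varphi_t)_{t\ge0}$ be a semiflow on $X$ with Koopman semigroup $(U_t)_{t\ge0}$. For $t\ge0$ define $K_t:\mathrm{Span}\{k(x,\cdot):x\in X\}\to\mathrm{Span}\{k(x,\cdot):x\in X\}$ as the linear extension of $K_tk(x,\cdot):=k(\varphi_t(x),\cdot)$. Then $(K_t)_{t\ge0}$ is a well-defined family of linear operators and $K_t'=U_t$ for all $t\ge0$.
   Context: An RKBS with kernel on $X$: $(\mathcal{B},\mathcal{B}',\langle\cdot,\cdot\rangle,k)$ with $\mathcal{B},\mathcal{B}'$ Banach spaces of functions on $X$ (pointwise operations), continuous point evaluations on $\mathcal{B}$, $\langle\cdot,\cdot\rangle:\mathcal{B}\times\mathcal{B}'\to\mathbb{C}$ continuous bilinear, $k(x,\cdot)\in\mathcal{B}'$ and $g(x)=\langle g,k(x,\cdot)\rangle$ for all $g\in\mathcal{B}$, $x\in X$. A semiflow is a family of maps $\varphi_t:X\to X$, $t\ge0$, with $\varphi_0=\mathrm{id}$ and $\varphi_{t+s}=\varphi_t\circ\varphi_s$. Koopman semigroup: $U_tg:=g\circ\varphi_t$ on $D(U_t):=\{g\in\mathcal{B}:g\circ\varphi_t\in\mathcal{B}\}$. For an operator $T:D(T)\subset\mathcal{B}'\to\mathcal{B}'$ whose domain is dense w.r.t. $\langle\cdot,\cdot\rangle$ (i.e. $g\in\mathcal{B}$,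 $\langle g,h\rangle=0$ for all $h\in D(T)$ imply $g=0$), the adjoint $T':D(T')\subset\mathcal{B}\to\mathcal{B}$ is given by $D(T')=\{g\in\mathcal{B}:\exists z\in\mathcal{B},\ \langle g,Th\rangle=\langle z,h\rangle\ \forall h\in D(T)\}$, $T'g:=z$. *)

From HB Require Import structures.
From mathcomp Require Import all_boot all_order all_algebra.
From mathcomp Require Import all_classical all_reals all_analysis.
From mathcomp Require Import complex.
Set Implicit Arguments. Unset Strict Implicit. Unset Printing Implicit Defensive.
Import Order.TTheory GRing.Theory Num.Theory.
Import numFieldNormedType.Exports.
Local Open Scope ring_scope.

(* The complex numbers, seen as a numFieldType (so that they carry the normed topology). *)
Definition cpx (R : realType) : numFieldType := R[i].

(* ev : V -> (X -> C) realises V as a space of functions on X with pointwise operations *)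
Definition pointwise_linear (K : numFieldType) (V : lmodType K) (X : Type)
  (ev : V -> X -> K) : Prop :=
  forall (a : K) (u v : V) (x : X), ev (a *: u + v) x = a * ev u x + ev v x.

(* (B, B', <.,.>, k) is an RKBS with kernel on X.  B and B' are Banach spaces over C,
   identified with spaces of functions on X via the injective linear maps evB, evB'. *)
Definition is_RKBS (R : realType) (X : Type)
  (B B' : completeNormedModType (cpx R))
  (evB : B -> X -> cpx R) (evB' : B' -> X -> cpx R)
  (pair : B -> B' -> cpx R) (k : X -> B') : Prop :=
  [/\ (injective evB /\ pointwise_linear evB) /\
        (injective evB' /\ pointwise_linear evB'),
      (forall x : X, continuous (fun g : B => evB g x)),
      (forall (a : cpx R) (g1 g2 : B) (h : B'),
          pair (a *: g1 + g2) h = a * pair g1 h + pair g2 h) /\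
      (forall (a : cpx R) (g : B) (h1 h2 : B'),
          pair g (a *: h1 + h2) = a * pair g h1 + pair g h2),
      continuous (fun p : B * B' => pair p.1 p.2) &
      (forall (g : B) (x : X), evB g x = pair g (k x))].

Definition lin_indep (K : numFieldType) (V : lmodType K) (X : Type) (k : X -> V) : Prop :=
  forall (n : nat) (f : 'I_n -> X) (c : 'I_n -> K), injective f ->
    \sum_(i < n) c i *: k (f i) = 0 -> forall i, c i = 0.

Definition kspan (K : numFieldType) (V : lmodType K) (X : Type) (k : X -> V) : set V :=
  fun h => exists (n : nat) (f : 'I_n -> X) (c : 'I_n -> K),
    h = \sum_(i < n) c i *: k (f i).

Definition is_semiflow (R : realType) (X : Type) (phi : R -> X -> X) : Prop :=
  (forall x, phi 0 x = x) /\
  (forall t s : R, 0 <= t -> 0 <= s -> forall x, phi (t + s) x = phi t (phi s x)).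

(* graph of the Koopman operator U_t :  g \in D(U_t) and U_t g = z *)
Definition koopman_graph (R : realType) (X : Type) (B : completeNormedModType (cpx R))
  (evB : B -> X -> cpx R) (phi : R -> X -> X) (t : R) (g z : B) : Prop :=
  evB z = (evB g) \o (phi t).

(* a map T defined on the domain D (values outside D are irrelevant) is linear on D *)
Definition linear_on (K : numFieldType) (V W : lmodType K) (D : set V) (T : V -> W) : Prop :=
  forall (a : K) (h1 h2 : V), D h1 -> D h2 -> T (a *: h1 + h2) = a *: T h1 + T h2.

(* K is (a representative of) the operator K_t on Span{k(x,.)}:
   linear on the span, with K (k(x,.)) = k(phi_t x, .) *)
Definition is_Kt (R : realType) (X : Type) (B' : completeNormedModType (cpx R))
  (k : X -> B') (phi : R -> X -> X) (t : R) (K : B' -> B') : Prop :=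
  linear_on (kspan k) K /\ (forall x, K (k x) = k (phi t x)).

Definition pairing_dense (R : realType) (B B' : completeNormedModType (cpx R))
  (pair : B -> B' -> cpx R) (D : set B') : Prop :=
  forall g : B, (forall h, D h -> pair g h = 0) -> g = 0.

(* graph of the adjoint T' of T : D(T) = D -> B' :  g \in D(T') and T' g = z *)
Definition adjoint_graph (R : realType) (B B' : completeNormedModType (cpx R))
  (pair : B -> B' -> cpx R) (D : set B') (T : B' -> B') (g z : B) : Prop :=
  forall h, D h -> pair g (T h) = pair z h.

From HB Require Import structures.
From mathcomp Require Import all_boot all_order all_algebra.
From mathcomp Require Import all_classical all_reals all_analysis.
From mathcomp Require Import complex.
Import Order.TTheory GRing.Theory Num.Theory.
Import numFieldNormedType.Exports.
Set Implicit Arguments. Unset Strict Implicit. Unset Printing Implicit Defensive.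
Local Open Scope ring_scope.

(* Linear independence of the k(x,.) means that two finite combinations representing
   the same vector of the span (after merging repeated points) have the same
   coefficients, so they transport to the same combination of arbitrary values F(x):
   this makes K_t well defined.  Since <g, k(x,.)> = g(x) and both sides of
   <g, K_t h> = <z, h> are linear in h on the span, the adjoint relation holds iff
   g(phi_t x) = z(x) for all x, i.e. z = U_t g.  Density of the span w.r.t. the
   pairing is injectivity of point evaluations. *)

Section FiniteCombinations.
Variables (K : numFieldType) (X : Type).

Lemma sum_reindex_injective (I : finType) (f : I -> X) (c : I -> K) :
  exists m (g : 'I_m -> X) (d : 'I_m -> K), injective g /\
    forall (W : lmodType K) (F : X -> W),
      \sum_i c i *: F (f i) = \sum_(l < m) d l *: F (g l).
Proof.
pose rep i := odflt i [pick j | `[< f j = f i >]].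
have f_rep i : f (rep i) = f i by rewrite /rep; case: pickP => [j /asboolP|].
have rep_eq i i' : f i = f i' -> rep i = rep i'.
  move=> fii'; rewrite /rep fii'; case: pickP => //= nf.
  by have := nf i'; rewrite asboolT.
have rep_idem i : rep (rep i) = rep i by apply: rep_eq; rewrite f_rep.
pose A := [pred j | rep j == j].
exists #|A|, (f \o enum_val), (fun l => \sum_(i | rep i == enum_val l) c i).
split=> [l1 l2 /= /rep_eq|W F].
  have := enum_valP l1; have := enum_valP l2; rewrite !inE => /eqP -> /eqP ->.
  exact: enum_val_inj.
transitivity (\sum_i c i *: F (f (rep i))); first by apply: eq_bigr => i _; rewrite f_rep.
rewrite (partition_big rep A) => [|i _]; last by rewrite inE rep_idem.
rewrite (big_enum_val (fun j => \sum_(i | rep i == j) c i *: F (f (rep i)))).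
apply: eq_bigr => l _; rewrite scaler_suml.
by apply: eq_bigr => i /eqP repi; rewrite repi.
Qed.

Definition copair (I J T : Type) (u : I -> T) (v : J -> T) (s : I + J) : T :=
  match s with inl i => u i | inr j => v j end.

Lemma sum_copair (W : lmodType K) (I J : finType) (a b : K)
    (c : I -> K) (e : J -> K) (f : I -> X) (g : J -> X) (F : X -> W) :
  \sum_s copair (fun i => a * c i) (fun j => b * e j) s *: F (copair f g s) =
  a *: \sum_i c i *: F (f i) + b *: \sum_j e j *: F (g j).
Proof.
by rewrite big_sumType !scaler_sumr; congr (_ + _); apply: eq_bigr => ? _; rewrite scalerA.
Qed.

Variables (V : lmodType K) (k : X -> V).

Lemma kspan_k (x : X) : kspan k (k x).
Proof. by exists 1%N, (fun=> x), (fun=> 1); rewrite big_ord1 scale1r. Qed.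

Lemma linear_on_kspan_sum (W : lmodType K) (T : V -> W) :
  linear_on (kspan k) T -> forall n (f : 'I_n -> X) (c : 'I_n -> K),
  T (\sum_(i < n) c i *: k (f i)) = \sum_(i < n) c i *: T (k (f i)).
Proof.
move=> T_lin; elim=> [|n IHn] f c.
  have span0 : kspan k 0 by exists 0%N, f, c; rewrite big_ord0.
  have := T_lin 1 0 0 span0 span0; rewrite !big_ord0 !scale1r addr0.
  by rewrite -[LHS]addr0 => /addrI.
rewrite !big_ord_recr /= addrC T_lin; first by rewrite IHn addrC.
  exact: kspan_k.
by exists n, (f \o widen_ord (leqnSn n)), (c \o widen_ord (leqnSn n)).
Qed.

Lemma linear_on_kspan_eq (W : lmodType K) (T1 T2 : V -> W) :
  linear_on (kspan k) T1 -> linear_on (kspan k) T2 ->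
  (forall x, T1 (k x) = T2 (k x)) -> forall h, kspan k h -> T1 h = T2 h.
Proof.
move=> T1_lin T2_lin T12 h [n [f [c ->]]].
by rewrite !linear_on_kspan_sum //; apply: eq_bigr => i _; rewrite T12.
Qed.

Hypothesis k_indep : lin_indep k.

Lemma lin_indep_sum_eq0 (I : finType) (f : I -> X) (c : I -> K) :
  \sum_i c i *: k (f i) = 0 ->
  forall (W : lmodType K) (F : X -> W), \sum_i c i *: F (f i) = 0.
Proof.
have [m [g [d [g_inj sum_g]]]] := sum_reindex_injective f c.
rewrite sum_g => /(k_indep g_inj) d0 W F; rewrite sum_g.
by apply: big1 => l _; rewrite d0 // scale0r.
Qed.

Lemma lin_indep_sum_eq (I J : finType) (f : I -> X) (c : I -> K) (g : J -> X) (e : J -> K) :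
  \sum_i c i *: k (f i) = \sum_j e j *: k (g j) ->
  forall (W : lmodType K) (F : X -> W), \sum_i c i *: F (f i) = \sum_j e j *: F (g j).
Proof.
move=> sum_eq W F; apply/eqP; rewrite -subr_eq0 -[S in S - _]scale1r -scaleN1r.
rewrite -sum_copair; apply/eqP/lin_indep_sum_eq0.
by rewrite sum_copair scale1r scaleN1r sum_eq subrr.
Qed.

(* [xget] picks an arbitrary representation of [h]; off the span the value is the junk [0]. *)
Definition kspan_extend (W : lmodType K) (F : X -> W) (h : V) : W :=
  xget 0 (fun w => exists n (f : 'I_n -> X) (c : 'I_n -> K),
    h = \sum_(i < n) c i *: k (f i) /\ w = \sum_(i < n) c i *: F (f i)).

Lemma kspan_extend_sum (W : lmodType K) (F : X -> W) (I : finType) (f : I -> X) (c : I -> K) :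
  kspan_extend F (\sum_i c i *: k (f i)) = \sum_i c i *: F (f i).
Proof.
rewrite /kspan_extend; set P := (fun w => _).
have [m [g [d [_ sum_g]]]] := sum_reindex_injective f c.
have [n [f' [c' [rep_k ->]]]] : P (xget 0 P).
  by apply: xgetPex; exists (\sum_i c i *: F (f i)), m, g, d; rewrite !sum_g.
exact: lin_indep_sum_eq.
Qed.

Lemma kspan_extend_k (W : lmodType K) (F : X -> W) (x : X) : kspan_extend F (k x) = F x.
Proof.
have := kspan_extend_sum F (fun _ : 'I_1 => x) (fun=> 1).
by rewrite !big_ord1 !scale1r.
Qed.

Lemma kspan_extend_linear (W : lmodType K) (F : X -> W) : linear_on (kspan k) (kspan_extend F).
Proof.
move=> a _ _ [n [f [c ->]]] [m [g [e ->]]].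
rewrite !kspan_extend_sum -(scale1r (\sum_j e j *: k (g j))).
by rewrite -(scale1r (\sum_j e j *: F (g j))) -!sum_copair kspan_extend_sum.
Qed.

End FiniteCombinations.

Lemma adjoint_graph_kspanP (R : realType) (X : Type) (B B' : completeNormedModType (cpx R))
    (pair : B -> B' -> cpx R) (k : X -> B') (T : B' -> B') (g z : B) :
  (forall (a : cpx R) (g : B) (h1 h2 : B'), pair g (a *: h1 + h2) = a * pair g h1 + pair g h2) ->
  linear_on (kspan k) T ->
  adjoint_graph pair (kspan k) T g z <-> forall x, pair g (T (k x)) = pair z (k x).
Proof.
move=> pair_lin T_lin; split=> [adj x|on_k]; first exact/adj/kspan_k.
apply: (@linear_on_kspan_eq _ _ _ _ (cpx R)^o) => // a h1 h2 h1_span h2_span.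
by rewrite T_lin.
Qed.

Lemma pairing_dense_kspan (R : realType) (X : Type) (B B' : completeNormedModType (cpx R))
    (evB : B -> X -> cpx R) (pair : B -> B' -> cpx R) (k : X -> B') :
  injective evB -> pointwise_linear evB -> (forall g x, evB g x = pair g (k x)) ->
  pairing_dense pair (kspan k).
Proof.
move=> evB_inj evB_lin evB_pair g g_orth; apply: evB_inj; apply/funext => x.
rewrite evB_pair g_orth; last exact: kspan_k.
by have := evB_lin 1 0 0 x; rewrite scale1r addr0 mul1r -[LHS]addr0 => /addrI.
Qed.

Theorem proposition2 (R : realType) (X : Type)
  (B B' : completeNormedModType (cpx R))
  (evB : B -> X -> cpx R) (evB' : B' -> X -> cpx R)
  (pair : B -> B' -> cpx R) (k : X -> B') (phi : R -> X -> X) :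
  is_RKBS evB evB' pair k -> lin_indep k -> is_semiflow phi ->
  forall t : R, 0 <= t ->
    [/\ (exists K : B' -> B', is_Kt k phi t K),
        (forall K1 K2 : B' -> B', is_Kt k phi t K1 -> is_Kt k phi t K2 ->
           forall h, kspan k h -> K1 h = K2 h),
        pairing_dense pair (kspan k) &
        (forall K : B' -> B', is_Kt k phi t K ->
           forall g z : B,
             adjoint_graph pair (kspan k) K g z <-> koopman_graph evB phi t g z)].
Proof.
move=> [[[evB_inj evB_lin] _] _ [_ pair_lin] _ evB_pair] k_indep _ t _; split.
- exists (kspan_extend k (k \o phi t)); split; first exact: kspan_extend_linear.
  exact: kspan_extend_k.
- move=> K1 K2 [K1_lin K1_k] [K2_lin K2_k].
  by apply: linear_on_kspan_eq => // x; rewrite K1_k K2_k.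
- exact: pairing_dense_kspan evB_pair.
- move=> K [K_lin K_k] g z; rewrite adjoint_graph_kspanP //.
  under eq_forall do rewrite K_k -!evB_pair.
  by split=> [on_k|-> x //]; apply/funext => x /=; rewrite on_k.
Qed.
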